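(* Let $p$ be a prime. Then $2p$ is a GA1 number if and only if $p=2$ or $p>5$.
   Context: For a positive integer $n$, $\sigma(n)=\sum_{d\mid n} d$. For integers $n>1$ define $G(n)=\dfrac{\sigma(n)}{n\log\log n}$ (natural logarithms). A positive integer $n$ is a GA1 number (GA number of the first kind) if $n$ is composite and $G(n)\ge G(n/p)$ for every prime $p$ dividing $n$. *)

From mathcomp Require Import all_boot.
From Stdlib Require Import Reals.

Definition sigma (n : nat) : nat := (\sum_(d <- divisors n) d)%N.

Definition G (n : nat) : R :=
  (INR (sigma n) / (INR n * ln (ln (INR n))))%R.

Definition composite (n : nat) : Prop := (1 < n)%N /\ ~~ prime n.

Definition GA1 (n : nat) : Prop :=
  composite n /\ forall p : nat, prime p -> (p %| n)%N -> (G (n %/ p) <= G n)%R.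

From Pilot Require Import Defs.
From Stdlib Require Import Reals Lra.
From Coquelicot Require Import Rcomplements ElemFct.
From mathcomp Require Import all_boot zify.

(* Divisor sums.  sigma p = p + 1 and, for an odd prime p,
   sigma (2p) = 3 (p + 1); both follow from listing the divisors explicitly.
   The primes dividing 2p are 2 and p.

   For p = 2 the only condition is G 2 <= G 4, true because
   G 2 < 0 < G 4 (ln ln 2 < 0 < ln ln 4).  For an odd prime p, dividing 2p
   by p gives G 2 < 0 < G (2p), so GA1 (2p) reduces to G p <= G (2p).  With
   P = p this reads (P+1)/(P lnln P) <= 3(P+1)/(2P lnln 2P), i.e.
   2 lnln (2P) <= 3 lnln P, i.e. (ln 2 + ln P)^2 <= (ln P)^3.

   From 2.7 <= e <= 2.77 (a Taylor lower bound and the upper bound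
   exp x <= 1/(1-x) raised to the 32nd power) we get 1/2 < ln 2 <= 0.7,
   ln 5 <= 1.65 and ln 7 >= 1.9, which decide the last inequality: it fails
   for p = 3, 5 and holds for every p >= 7. *)

(* The real-number libraries open the real scope and shadow sigma (hence the
   qualified Defs.sigma); the arithmetic on nat comes first. *)
Local Open Scope nat_scope.

Lemma sigma_from_divisors (n : nat) (s : seq nat) :
  0 < n -> uniq s -> (forall d, (d \in s) = (d %| n)) -> Defs.sigma n = sumn s.
Proof.
move=> n_gt0 s_uniq s_dvd; rewrite /Defs.sigma sumnE; apply: perm_big.
apply: uniq_perm; [exact: divisors_uniq | exact: s_uniq |] => d.
by rewrite s_dvd dvdn_divisors.
Qed.

Lemma sigma_prime (p : nat) : prime p -> Defs.sigma p = p.+1.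
Proof.
move=> p_prime; have p_gt1 := prime_gt1 p_prime.
rewrite (sigma_from_divisors p [:: 1; p]) /=; first lia.
- lia.
- by rewrite inE andbT; lia.
move=> d; rewrite !inE; apply/idP/idP.
  by case/orP=> /eqP->; rewrite ?dvd1n ?dvdnn.
by case/primeP: p_prime => _ /[apply].
Qed.

Lemma dvdn2 (d : nat) : d %| 2 -> d = 1 \/ d = 2.
Proof.
move=> d_dvd; have := dvdn_leq (isT : 0 < 2) d_dvd.
by case: d d_dvd => [|[|[|d]]] //= _ _; [left | right].
Qed.

Lemma sigma_2p (p : nat) : prime p -> 2 < p -> Defs.sigma (2 * p) = 3 * p.+1.
Proof.
move=> p_prime p_gt2.
rewrite (sigma_from_divisors (2 * p) [:: 1; 2; p; 2 * p]) /=; first lia.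
- lia.
- by rewrite !inE; lia.
move=> d; rewrite !inE; apply/idP/idP.
  case/or4P=> /eqP->;
    [exact: dvd1n | exact: dvdn_mulr | exact: dvdn_mull | exact: dvdnn].
have [/dvdnP[k ->]|p_ndvd] := boolP (p %| d).
  by rewrite dvdn_pmul2r ?prime_gt0 // => /dvdn2[]->; rewrite ?mul1n eqxx ?orbT.
rewrite Gauss_dvdl; last by rewrite coprime_sym prime_coprime.
by move/dvdn2=> []->; rewrite eqxx ?orbT.
Qed.

Lemma prime_dvdn_2p (p q : nat) : prime p -> prime q -> q %| 2 * p -> q = 2 \/ q = p.
Proof.
move=> p_prime q_prime; rewrite Euclid_dvdM // => /orP[] q_dvd; [left | right]; apply/eqP.
  by rewrite -(dvdn_prime2 q_prime (isT : prime 2)).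
by rewrite -(dvdn_prime2 q_prime p_prime).
Qed.

Lemma composite_2p (p : nat) : prime p -> composite (2 * p).
Proof.
move=> p_prime; have p_gt1 := prime_gt1 p_prime; split; first lia.
apply/negP=> /primeP[_ /(_ 2 (dvdn_mulr _ (dvdnn 2)))]; lia.
Qed.

Local Open Scope R_scope.

(* exp (-x) >= 1 - x gives exp x <= 1/(1-x), hence exp (n x) <= (1/(1-x))^n. *)
Lemma exp_mul_le_geom (n : nat) (x : R) :
  x < 1 -> exp (INR n * x) <= (/ (1 - x)) ^ n.
Proof.
move=> x_lt1.
have exp_x : exp x <= / (1 - x).
  have := exp_ineq1_le (- x); rewrite exp_Ropp => H.
  rewrite -(Rinv_inv (exp x)); apply: Rinv_le_contravar; lra.
elim: n => [|n IHn]; first by rewrite Rmult_0_l exp_0 /=; lra.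
rewrite S_INR Rmult_plus_distr_r Rmult_1_l exp_plus /= Rmult_comm.
by apply: Rmult_le_compat => //; left; apply: exp_pos.
Qed.

(* Numerical enclosure of e: Taylor sum up to 1/5! below, (32/31)^32 above. *)
Lemma e_bounds : 27/10 <= exp 1 <= 277/100.
Proof.
split.
  by have := exp_ge_taylor 1 5 ltac:(lra); rewrite /= /Rdiv; lra.
have := exp_mul_le_geom 32 (1/32) ltac:(lra).
have -> : INR 32 * (1/32) = 1 by rewrite /=; field.
by move=> H; apply: Rle_trans H _; simpl; lra.
Qed.

Lemma ln_ge_of_pow (a : R) (m n : nat) :
  0 < a -> (277/100) ^ m <= a ^ n -> INR m <= INR n * ln a.
Proof.
move=> a_gt0 pow_le; have [e_lo e_hi] := e_bounds.
have : exp 1 ^ m <= a ^ n.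
  by apply: Rle_trans pow_le; apply: pow_incr; lra.
move/(ln_le _ _ (pow_lt _ _ (exp_pos 1))).
by rewrite !ln_pow ?ln_exp //; [lra | apply: exp_pos].
Qed.

Lemma ln_le_of_pow (a : R) (m n : nat) :
  0 < a -> a ^ n <= (27/10) ^ m -> INR n * ln a <= INR m.
Proof.
move=> a_gt0 pow_le; have [e_lo e_hi] := e_bounds.
have : a ^ n <= exp 1 ^ m.
  by apply: Rle_trans pow_le _; apply: pow_incr; lra.
move/(ln_le _ _ (pow_lt _ _ a_gt0)).
by rewrite !ln_pow ?ln_exp //; [lra | apply: exp_pos].
Qed.

(* The logarithms needed to separate p = 3, 5 from p >= 7. *)
Lemma ln2_hi : ln 2 <= 7/10.
Proof. by have := ln_le_of_pow 2 7 10 ltac:(lra) ltac:(lra); simpl INR; lra. Qed.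

Lemma ln5_hi : ln 5 <= 33/20.
Proof. by have := ln_le_of_pow 5 33 20 ltac:(lra) ltac:(lra); simpl INR; lra. Qed.

Lemma ln7_lo : 19/10 <= ln 7.
Proof. by have := ln_ge_of_pow 7 19 10 ltac:(lra) ltac:(lra); simpl INR; lra. Qed.

Lemma ln_le_iff (a b : R) : 0 < a -> 0 < b -> ln a <= ln b <-> a <= b.
Proof.
move=> a_gt0 b_gt0; split; last exact: ln_le.
move=> ln_ab; apply: Rnot_lt_le => b_lt_a.
by have := ln_increasing _ _ b_gt0 b_lt_a; lra.
Qed.

(* e < 3, so ln x > 1 and ln (ln x) > 0 for x >= 3. *)
Lemma ln_gt1 (x : R) : 3 <= x -> 1 < ln x.
Proof.
move=> x_ge3; have [_ e_hi] := e_bounds.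
by rewrite -(ln_exp 1); apply: ln_increasing; [apply: exp_pos | lra].
Qed.

Lemma lnln_pos (x : R) : 3 <= x -> 0 < ln (ln x).
Proof. by move=> x_ge3; rewrite -ln_1; apply: ln_increasing; [lra | apply: ln_gt1]. Qed.

(* With x = ln p and c = ln 2, (c + x)^2 = (ln 2p)^2: the cube wins for large x
   and loses for small x. *)
Lemma sq_le_cube (x c : R) : 19/10 <= x -> 0 <= c <= 7/10 -> (c + x) ^ 2 <= x ^ 3.
Proof. by move=> x_lo c_bd; simpl; nra. Qed.

Lemma cube_lt_sq (x c : R) : 0 < x <= 33/20 -> 1/2 < c -> x ^ 3 < (c + x) ^ 2.
Proof. by move=> x_bd c_lo; simpl; nra. Qed.

(* Exponentiating 2 ln(ln 2P) <= 3 ln(ln P) turns it into a polynomial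
   inequality between ln 2P and ln P. *)
Lemma loglog_ineq_iff (P : R) : 3 <= P ->
  (ln (2 * P)) ^ 2 <= (ln P) ^ 3 <-> 2 * ln (ln (2 * P)) <= 3 * ln (ln P).
Proof.
move=> P_ge3; have lnP := ln_gt1 P P_ge3; have ln2P := ln_gt1 (2 * P) ltac:(lra).
rewrite -(ln_le_iff (ln (2 * P) ^ 2)); try (apply: pow_lt; lra).
by rewrite !ln_pow; try lra; simpl INR; split; lra.
Qed.

Lemma INR_ge3 (p : nat) : (2 < p)%N -> 3 <= INR p.
Proof. by move=> p_gt2; have := le_INR 3 p (elimT leP p_gt2); simpl INR; lra. Qed.

Lemma G_prime (p : nat) : prime p ->
  G p = (INR p + 1) / (INR p * ln (ln (INR p))).
Proof. by move=> p_prime; rewrite /G sigma_prime // S_INR. Qed.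

Lemma G_2p (p : nat) : prime p -> (2 < p)%N ->
  G (2 * p)%N = 3 * (INR p + 1) / (2 * INR p * ln (ln (2 * INR p))).
Proof.
move=> p_prime p_gt2.
by rewrite /G sigma_2p // !mult_INR (S_INR p) (INR_IZR_INZ 2) (INR_IZR_INZ 3).
Qed.

(* ln 2 < 1 makes G 2 negative, while ln 4 > 1 makes G 4 positive. *)
Lemma G_2_neg : G 2 < 0.
Proof.
rewrite /G (sigma_prime 2) // !INR_IZR_INZ /=.
have := ln_lt_2; have := ln2_hi => ln2_le ln2_gt.
have lnln2_neg : ln (ln 2) < 0 by rewrite -ln_1; apply: ln_increasing; lra.
by rewrite /Rdiv; have := Rinv_lt_0_compat (2 * ln (ln 2)) ltac:(lra); nra.
Qed.

Lemma G_4_pos : 0 < G 4.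
Proof.
have sigma_4 : Defs.sigma 4 = 7%N by rewrite /Defs.sigma unlock.
rewrite /G sigma_4 !INR_IZR_INZ /=.
have ln4 : 1 < ln 4.
  by rewrite -[4]/(2 * 2) ln_mult; have := ln_lt_2; lra.
have lnln4 : 0 < ln (ln 4) by rewrite -ln_1; apply: ln_increasing; lra.
by apply: Rdiv_lt_0_compat; nra.
Qed.

Lemma G_2p_pos (p : nat) : prime p -> (2 < p)%N -> 0 < G (2 * p)%N.
Proof.
move=> p_prime p_gt2; have P_ge3 := INR_ge3 p p_gt2.
have lnln2P := lnln_pos (2 * INR p) ltac:(lra).
by rewrite G_2p //; apply: Rdiv_lt_0_compat; nra.
Qed.

(* The GA1 condition at the prime 2, in logarithmic form: G(2p) - G(p) has
   the sign of 3 lnln p - 2 lnln (2p). *)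
Lemma G_prime_le_G_2p_iff (p : nat) : prime p -> (2 < p)%N ->
  G p <= G (2 * p)%N <-> 2 * ln (ln (2 * INR p)) <= 3 * ln (ln (INR p)).
Proof.
move=> p_prime p_gt2; rewrite G_prime // G_2p //.
have := INR_ge3 p p_gt2; move: (INR p) => P P_ge3.
have lnlnP := lnln_pos P P_ge3; have lnln2P := lnln_pos (2 * P) ltac:(lra).
set a := ln (ln P) in lnlnP *; set b := ln (ln (2 * P)) in lnln2P *.
have G_diff : 3 * (P + 1) / (2 * P * b) - (P + 1) / (P * a)
              = (P + 1) / (2 * P * a * b) * (3 * a - 2 * b) by field; lra.
have factor_pos : 0 < (P + 1) / (2 * P * a * b).
  by apply: Rdiv_lt_0_compat; [lra | apply: Rmult_lt_0_compat; nra].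
have -> : (P + 1) / (P * a) <= 3 * (P + 1) / (2 * P * b) <->
          0 <= 3 * (P + 1) / (2 * P * b) - (P + 1) / (P * a) by split; lra.
by rewrite G_diff; split=> H; nra.
Qed.

(* The inequality (ln 2p)^2 <= (ln p)^3 holds exactly for the odd primes p > 5:
   p = 3, 5 have ln p <= 1.65, and p >= 7 has ln p >= 1.9. *)
Lemma ln_2p_sq_le_ln_p_cube_iff (p : nat) : prime p -> (2 < p)%N ->
  (ln (2 * INR p)) ^ 2 <= (ln (INR p)) ^ 3 <-> (5 < p)%N.
Proof.
move=> p_prime p_gt2; have P_ge3 := INR_ge3 p p_gt2.
have ln2_gt := ln_lt_2; have ln2_le := ln2_hi.
rewrite ln_mult; try lra.
have [p_gt5 | p_le5] := ltnP 5 p; split=> // ineq.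
  have p_ge7 : (7 <= p)%N by case: (p =P 6%N) p_prime => [-> //|]; lia.
  apply: sq_le_cube; last lra.
  apply: Rle_trans ln7_lo (ln_le _ _ _ _); first lra.
  by have := le_INR 7 p (elimT leP p_ge7); simpl INR; lra.
have lnP_bd : 0 < ln (INR p) <= 33/20.
  split; first by have := ln_gt1 _ P_ge3; lra.
  apply: Rle_trans (ln_le _ _ _ _) ln5_hi; first lra.
  by have := le_INR p 5 (elimT leP p_le5); simpl INR; lra.
by have := cube_lt_sq _ (ln 2) lnP_bd ltac:(lra); lra.
Qed.

(* The case p = 2: the only prime divisor of 4 is 2. *)
Lemma GA1_4 : GA1 4.
Proof.
split; first exact: (composite_2p 2).
move=> q q_prime q_dvd; have -> : q = 2%N by case: (prime_dvdn_2p 2 q isT q_prime q_dvd).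
have -> : (4 %/ 2 = 2)%N by [].
by have := G_2_neg; have := G_4_pos; lra.
Qed.

(* For odd p, the condition at the prime p is automatic (G 2 < 0 < G (2p)),
   so GA1 (2p) is the condition at the prime 2. *)
Lemma GA1_2p_iff (p : nat) : prime p -> (2 < p)%N ->
  GA1 (2 * p) <-> G p <= G (2 * p)%N.
Proof.
move=> p_prime p_gt2; have p_gt0 := prime_gt0 p_prime.
have G_2_le := Rlt_le _ _ (Rlt_trans _ _ _ G_2_neg (G_2p_pos p p_prime p_gt2)).
split=> [[_ GA1_2p] | G_le].
  by have := GA1_2p 2%N isT (dvdn_mulr _ (dvdnn 2)); rewrite mulKn.
split=> [|q q_prime q_dvd]; first exact: composite_2p.
by case: (prime_dvdn_2p p q p_prime q_prime q_dvd) => ->; rewrite ?mulKn ?mulnK.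
Qed.

Local Close Scope R_scope.

Theorem proposition3 (p : nat) :
  prime p -> (GA1 (2 * p) <-> p = 2 \/ (5 < p)%N).
Proof.
move=> p_prime; have [->|p_ne2] := eqVneq p 2.
  by split=> _; [left | exact: GA1_4].
have p_gt2 : 2 < p by have := prime_gt1 p_prime; lia.
rewrite GA1_2p_iff // G_prime_le_G_2p_iff // -loglog_ineq_iff; last exact: INR_ge3.
rewrite ln_2p_sq_le_ln_p_cube_iff //.
by split=> [|[p_eq2|]] //; [right | move: p_ne2; rewrite p_eq2].
Qed.
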